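(* If $G$ is a (not necessarily connected) graph of order $n\ge 4$, then $7\le \gamma_{qtR}(G)+\gamma_{qtR}(\overline{G})\le n+5$. Moreover: (i) $\gamma_{qtR}(G)+\gamma_{qtR}(\overline{G})=7$ if and only if $G$ is one of $K_4$, $\overline{K_4}$, $K_4-e$, $\overline{K_4-e}$, or $G\in\mathcal{F}_1\cup\mathcal{F}'_1$; (ii) $\gamma_{qtR}(G)+\gamma_{qtR}(\overline{G})=n+5$ if and only if $G$ is the cycle $C_5$.
   Context: All graphs are finite, simple and undirected; $\overline{G}$ denotes the complement of $G$, and $K_4-e$ is $K_4$ with one edge removed. $\mathcal{F}_1$ is the family of all graphs of order $n$ that have exactly one vertex of degree $n-1$ and at least one vertex of degree one; $\mathcal{F}'_1$ is the family of complements of graphs in $\mathcal{F}_1$. For $f:V(G)\to\{0,1,2\}$ write $V_i=\{v:f(v)=i\}$; weight $\omega(f)=|V_1|+2|V_2|$. A quasi-total Roman dominating function (QTRDF) is an $f$ such that every vertex labeled $0$ is adjacent to a vertex labeled $2$, and every vertex isolated in the subgraph induced by $V_1\cup V_2$ has label $1$; $\gamma_{qtR}(G)$ is the minimum weight of a QTRDF. *)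

(* Simple graphs: a symmetric irreflexive relation e on a finType T. *)
From mathcomp Require Import all_boot.
Set Implicit Arguments. Unset Strict Implicit. Unset Printing Implicit Defensive.

Section Graphs.
Variable T : finType.

Definition compl (e : rel T) : rel T := [rel x y | (x != y) && ~~ e x y].

Definition deg (e : rel T) (v : T) : nat := #|[set u | e v u]|.

Definition is_qtrdf (e : rel T) (f : {ffun T -> 'I_3}) : bool :=
  [forall v, (val (f v) == 0) ==> [exists u, e v u && (val (f u) == 2)]] &&
  [forall v, ((val (f v) != 0) && [forall u, e v u ==> (val (f u) == 0)])
              ==> (val (f v) == 1)].

Definition weight (f : {ffun T -> 'I_3}) : nat := \sum_(v : T) val (f v).

(* minimum weight of a QTRDF; the constant-1 function is always a QTRDF of
   weight #|T|, so the default value #|T| does not affect the minimum. *)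
Definition gamma_qtR (e : rel T) : nat :=
  \big[minn/#|T|]_(f : {ffun T -> 'I_3} | is_qtrdf e f) weight f.

Definition inF1 (e : rel T) : bool :=
  (#|[set v | deg e v == #|T|.-1]| == 1) && [exists v, deg e v == 1].

Definition inF1' (e : rel T) : bool := inF1 (compl e).

Definition iso (e : rel T) (k : nat) (e' : rel 'I_k) : Prop :=
  exists h : T -> 'I_k, bijective h /\ forall x y, e x y = e' (h x) (h y).
End Graphs.
Arguments iso {T} e {k} e'.

Definition completeG (k : nat) : rel 'I_k := [rel i j | i != j].
Definition emptyG (k : nat) : rel 'I_k := [rel i j | false].
Definition K4_minus_e : rel 'I_4 :=
  [rel i j | (i != j) && ~~ ((val i == 0) && (val j == 1) || (val i == 1) && (val j == 0))].
Definition cycleG (k : nat) : rel 'I_k :=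
  [rel i j | (val j == (val i).+1 %% k) || (val i == (val j).+1 %% k)].
Arguments completeG k : clear implicits.
Arguments emptyG k : clear implicits.
Arguments cycleG k : clear implicits.

(* Let n = #|T| and s = gamma(G) + gamma(G^c).
   Upper bounds come from explicit labellings: if u has a neighbour v, labelling u
   by 2 and v and the non-neighbours of u by 1 gives gamma(G) + deg u <= n + 2; the
   same in G^c gives s <= n + 5, and s <= n + 3 if some vertex is dominating.
   Lower bounds come from light labellings: in a QTRDF of weight 3, or of weight 4
   with an isolated vertex, the unique vertex labelled 2 dominates the rest. So
   gamma >= 3, and gamma >= 4 without a dominating vertex, whence s >= 7; and s = 7
   forces a dominating vertex u with gamma(G^c) <= 4, leaving K4, K4 - e or a
   vertex of degree 1.
   If s = n + 5 every upper bound is tight: G is regular and neither G nor G^c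
   has a fork, which would save one more unit; this makes G and G^c 2-regular,
   so G = C5. Conversely gamma = n whenever the maximum degree is at most 2. *)

From mathcomp Require Import all_boot zify.
From Stdlib Require Import FunctionalExtensionality.
Set Implicit Arguments. Unset Strict Implicit. Unset Printing Implicit Defensive.

Lemma exists_neq (T : finType) (u : T) : 1 < #|T| -> exists v, v != u.
Proof.
move=> n2; have /card_gt0P [v] : 0 < #|[set~ u]| by rewrite cardsC1; lia.
by rewrite !inE; exists v.
Qed.

Lemma mem_uniq_card (T : finType) (s : seq T) x : uniq s -> #|T| <= size s -> x \in s.
Proof.
rewrite cardE => us le; have [_ ->] := uniq_min_size us (fun y _ => mem_enum T y) le.
exact: mem_enum.
Qed.

Definition dominating (T : finType) (e : rel T) (u : T) := [forall y, (y != u) ==> e u y].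
Definition isolated (T : finType) (e : rel T) (u : T) := [forall y, ~~ e u y].
Definition fork (T : finType) (e : rel T) (u v : T) :=
  e u v && (2 <= #|[set w | e v w && compl e u w]|).

Section Graph.
Variables (T : finType) (e : rel T).
Hypotheses (e_sym : symmetric e) (e_irr : irreflexive e).

Lemma dominatingP u : reflect (forall y, y != u -> e u y) (dominating e u).
Proof. by apply: (iffP forallP) => h y; [move/(implyP (h y)) | apply/implyP/h]. Qed.

Lemma adj_neq x y : e x y -> x != y.
Proof. by apply: contraTneq => ->; rewrite e_irr. Qed.

Lemma compl_sym : symmetric (compl e).
Proof. by move=> x y; rewrite /compl /= eq_sym e_sym. Qed.

Lemma compl_irr : irreflexive (compl e).
Proof. by move=> x; rewrite /compl /= eqxx. Qed.

Lemma complK : compl (compl e) = e.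
Proof.
apply: functional_extensionality => x; apply: functional_extensionality => y.
by rewrite /compl /=; case: eqVneq => [->|_] /=; rewrite ?e_irr ?negbK.
Qed.

Lemma adj_sub_setC1 x : [set y | e x y] \subset [set~ x].
Proof. by apply/subsetP=> y; rewrite !inE eq_sym => /adj_neq. Qed.

Lemma deg_le x : deg e x <= #|T|.-1.
Proof. by rewrite -(cardsC1 x) subset_leq_card ?adj_sub_setC1. Qed.

Lemma deg_le2 x p q : (forall y, e x y -> (y == p) || (y == q)) -> deg e x <= 2.
Proof.
move=> Nx; rewrite (leq_trans (subset_leq_card (_ : _ \subset [set p; q]))) //.
  by apply/subsetP => y; rewrite !inE => /Nx.
by rewrite cards2; case: (_ != _).
Qed.

Lemma deg_compl x : deg (compl e) x = #|T|.-1 - deg e x.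
Proof.
rewrite /deg; have -> : [set y | compl e x y] = ~: (x |: [set y | e x y]).
  by apply/setP=> y; rewrite !inE negb_or eq_sym.
have := cardsC (x |: [set y | e x y]); rewrite cardsU1 inE e_irr; lia.
Qed.

Lemma deg_dominating x : (deg e x == #|T|.-1) = dominating e x.
Proof.
rewrite /deg -(cardsC1 x) eqn_leq subset_leq_card ?adj_sub_setC1 //=.
apply/idP/dominatingP => [le y yx | dom].
  have /eqP NE : [set y | e x y] == [set~ x] by rewrite eqEcard adj_sub_setC1.
  by move: yx; rewrite -in_setC1 -NE inE.
by apply: subset_leq_card; apply/subsetP => y; rewrite !inE => /dom.
Qed.

Lemma exists_compl_adj x : ~~ dominating e x -> exists y, compl e x y.
Proof.
case/forallPn => y; rewrite negb_imply => /andP [yx nexy].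
by exists y; rewrite /compl /= eq_sym yx.
Qed.

Lemma exists_adj x : ~~ dominating (compl e) x -> exists y, e x y.
Proof.
case/forallPn => y; rewrite negb_imply /compl /= => /andP [yx].
by rewrite eq_sym yx negbK; exists y.
Qed.

Lemma dominating_compl_isolated u : dominating e u -> isolated (compl e) u.
Proof.
move/dominatingP => dom_u; apply/forallP => y; rewrite /compl /= negb_and negbK.
by case: eqVneq => //= uy; rewrite dom_u // eq_sym.
Qed.

Lemma dominating_compl_nondominating u x : 1 < #|T| -> dominating e u -> ~~ dominating (compl e) x.
Proof.
move=> n2 /dominatingP dom_u; apply/negP => /forallP dom_x.
have [y yx] := exists_neq x n2.
case: (eqVneq x u) => [xu|xu].
  by subst x; move: (dom_x y); rewrite yx /compl /= dom_u ?andbF.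
by move: (dom_x u); rewrite eq_sym xu /compl /= e_sym dom_u ?andbF.
Qed.

End Graph.

Section Iso.
Variables (T : finType) (e : rel T).

Lemma iso_of_seq k (e' : rel 'I_k.+1) (s : seq T) x0 :
  uniq s -> size s = k.+1 -> (forall x, x \in s) ->
  (forall i j : 'I_k.+1, e (nth x0 s i) (nth x0 s j) = e' i j) -> iso e e'.
Proof.
move=> us ss cov he; pose h x : 'I_k.+1 := inord (index x s).
pose g (i : 'I_k.+1) := nth x0 s i.
have hK : cancel h g by move=> x; rewrite /g inordK ?nth_index // -ss index_mem.
have gK : cancel g h.
  by move=> i; apply: val_inj; rewrite /h /g /= index_uniq ?inordK ?ss ?ltn_ord.
exists h; split => [|x y]; first by exists g.
by rewrite -he -[in LHS](hK x) -[in LHS](hK y).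
Qed.

Lemma iso_card k (e' : rel 'I_k) : iso e e' -> #|T| = k.
Proof. by case=> h [hb _]; rewrite (bij_eq_card hb) card_ord. Qed.

Lemma iso_compl k (e' : rel 'I_k) : iso e e' -> iso (compl e) (compl e').
Proof.
case=> h [hb he]; exists h; split => // x y.
by rewrite /compl /= he (inj_eq (bij_inj hb)).
Qed.

Lemma iso_deg_le k (e' : rel 'I_k) d : iso e e' -> (forall i, deg e' i <= d) ->
  forall x, deg e x <= d.
Proof.
case=> h [hb he] hd x; apply: leq_trans (hd (h x)); rewrite /deg.
rewrite -(card_imset [set y | e x y] (bij_inj hb)) subset_leq_card //.
by apply/subsetP => z /imsetP [y]; rewrite !inE he => exy ->.
Qed.

Lemma iso_dominating k (e' : rel 'I_k) i : iso e e' -> dominating e' i ->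
  exists u, dominating e u.
Proof.
case=> h [[g hK gK] he] /dominatingP dom_i; exists (g i); apply/dominatingP => y yu.
have := he (g i) y; rewrite gK => ->; apply: dom_i.
by rewrite -(can_eq hK) gK in yu.
Qed.

Lemma iso_compl_complete k : irreflexive e ->
  iso (compl e) (completeG k) -> iso e (emptyG k).
Proof.
move=> e_irr [h [hb he]]; exists h; split => // x y; move: (he x y).
rewrite /compl /completeG /= (inj_eq (bij_inj hb)).
by case: eqVneq => [->|_] /=; [rewrite e_irr | move/negbTE].
Qed.

End Iso.

(** * Quasi-total Roman dominating functions *)

Section QTRDF.
Variables (T : finType) (e : rel T).
Hypotheses (e_sym : symmetric e) (e_irr : irreflexive e).
Implicit Types (f : {ffun T -> 'I_3}).

Lemma gamma_le f : is_qtrdf e f -> gamma_qtR e <= weight f.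
Proof.
rewrite /gamma_qtR => hf; have : f \in index_enum _ by rewrite mem_index_enum.
elim: (index_enum _) => //= g r IH; rewrite inE big_cons => /predU1P [<-|/IH].
  by rewrite hf geq_minl.
by case: ifP => // _; rewrite geq_min => ->; rewrite orbT.
Qed.

Lemma gamma_ge k : k <= #|T| -> (forall f, is_qtrdf e f -> k <= weight f) ->
  k <= gamma_qtR e.
Proof.
move=> hk hf; apply: (big_ind (fun m => k <= m)) => // x y.
by rewrite leq_min => -> ->.
Qed.

Lemma gamma_le_card : gamma_qtR e <= #|T|.
Proof.
have one1 : val (inord 1 : 'I_3) = 1 by rewrite /= inordK.
apply: leq_trans (gamma_le (f := [ffun=> inord 1]) _) _.
  by apply/andP; split; apply/forallP => v; rewrite ffunE one1 ?implybT.
by rewrite /weight -sum1_card; under eq_bigr do rewrite ffunE one1.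
Qed.

Lemma qtrdf_zero f v : is_qtrdf e f -> val (f v) = 0 -> exists2 u, e v u & val (f u) = 2.
Proof.
case/andP=> /forallP/(_ v) + _ fv; rewrite fv eqxx /=.
by case/existsP=> u /andP [evu /eqP fu]; exists u.
Qed.

Lemma qtrdf_two f v : is_qtrdf e f -> val (f v) = 2 -> exists2 u, e v u & val (f u) != 0.
Proof.
case/andP=> _ /forallP/(_ v) + fv; rewrite fv /= implybF.
by case/forallPn=> u; rewrite negb_imply => /andP [evu fu]; exists u.
Qed.

Lemma qtrdf_isolated f v : is_qtrdf e f -> isolated e v -> val (f v) = 1.
Proof.
move=> hf /forallP iso_v; case fv: (val (f v)) => [|[|[|k]]] //.
- by have [u evu _] := qtrdf_zero hf fv; move: (iso_v u); rewrite evu.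
- by have [u evu _] := qtrdf_two hf fv; move: (iso_v u); rewrite evu.
- by move: (ltn_ord (f v)); rewrite fv.
Qed.

Definition labelled f (i : nat) : {set T} := [set v | val (f v) == i].

Lemma weight_labelled f : #|T| + #|labelled f 2| = weight f + #|labelled f 0|.
Proof.
rewrite /weight -!sum1_card (big_mkcond (mem (labelled f 2))).
rewrite (big_mkcond (mem (labelled f 0))) -!big_split /=; apply: eq_bigr => v _.
by rewrite !inE; case: (f v) => [[|[|[|]]]].
Qed.

Lemma qtrdf_two_exists f : is_qtrdf e f -> weight f < #|T| -> exists v, val (f v) = 2.
Proof.
move=> hf hw; case: (pickP [pred v | val (f v) == 2]) => [v /eqP|no2]; first by exists v.
have no0 : labelled f 0 = set0.
  apply/setP=> v; rewrite !inE; apply/negP => /eqP /(qtrdf_zero hf) [u _ /eqP].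
  by rewrite -[_ == _]/([pred v | val (f v) == 2] u) no2.
exfalso; have := weight_labelled f; rewrite no0 cards0; lia.
Qed.

(* A vertex labelled 2 has a neighbour of nonzero label, so with maximum degree
   2 it dominates at most one vertex labelled 0: there are at most as many 0s as 2s. *)
Lemma qtrdf_maxdeg2_weight f : is_qtrdf e f -> (forall x, deg e x <= 2) -> #|T| <= weight f.
Proof.
move=> hf hdeg; have := weight_labelled f.
suff : #|labelled f 0| <= #|labelled f 2| by lia.
pose t z := odflt z [pick u | e z u && (val (f u) == 2)].
have tP z : z \in labelled f 0 -> e z (t z) /\ val (f (t z)) = 2.
  rewrite inE /t => /eqP /(qtrdf_zero hf) [u ezu fu].
  by case: pickP => [w /andP [? /eqP ?] | /(_ u)] //=; rewrite ezu fu eqxx.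
rewrite -(card_in_imset (f := t)).
  by apply/subset_leq_card/subsetP => _ /imsetP [z /tP [_ fz] ->]; rewrite inE fz.
move=> z1 z2 z1P z2P tz; apply/eqP; apply: contraT => z12.
have [[ez1 ft] [ez2 _]] := (tP z1 z1P, tP z2 z2P).
have [u eu fu] := qtrdf_two hf ft.
suff : 3 <= deg e (t z1) by rewrite leqNgt ltnS hdeg.
apply/card_geqP; exists [:: z1; z2; u]; split => //.
  move: z1P z2P; rewrite /= !inE !negb_or z12 andbT => /eqP f1 /eqP f2.
  by apply/andP; split; apply: contra_neq fu => <-; rewrite ?f1 ?f2.
by move=> y; rewrite !inE => /or3P [] /eqP ->; [rewrite e_sym | rewrite e_sym tz |].
Qed.

Lemma gamma_maxdeg2 : (forall x, deg e x <= 2) -> gamma_qtR e = #|T|.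
Proof.
move=> hdeg; apply/eqP; rewrite eqn_leq gamma_le_card.
by apply: gamma_ge => // f hf; apply: qtrdf_maxdeg2_weight.
Qed.

Lemma sum_le_weight f (s : seq T) : uniq s -> \sum_(z <- s) val (f z) <= weight f.
Proof.
move=> us; rewrite big_uniq // /weight [leqRHS](bigID (mem s)) /=.
exact: leq_addr.
Qed.

Lemma weight_le_sum_eq0 f (s : seq T) z : uniq s ->
  weight f <= \sum_(y <- s) val (f y) -> z \notin s -> val (f z) = 0.
Proof.
move=> us; rewrite big_uniq // /weight [leqLHS](bigID (mem s)) /=.
rewrite -[leqRHS]addn0 leq_add2l leqn0 sum_nat_eq0 => /forallP f0 zs.
by apply/eqP; move: (f0 z); rewrite zs.
Qed.

(* The isolated vertices in [s] are labelled 1, a vertex [v] labelled 2 and a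
   neighbour of nonzero label use up the remaining weight 3, so [v] is the only
   vertex labelled 2 and must dominate everything else. *)
Lemma light_qtrdf_dominating f (s : seq T) : is_qtrdf e f -> uniq s -> all (isolated e) s ->
  weight f <= 3 + size s -> weight f < #|T| ->
  exists2 w, w \notin s & forall z, z \notin s -> z != w -> e w z.
Proof.
move=> hf us /allP iso_s w_le w_lt.
have [v fv] := qtrdf_two_exists hf w_lt; have [u evu fu] := qtrdf_two hf fv.
have f_s z : z \in s -> val (f z) = 1 by move/iso_s; apply: qtrdf_isolated.
have vs : v \notin s by apply/negP => /f_s; rewrite fv.
have us' : u \notin s.
  by apply/negP => /iso_s /forallP/(_ v); rewrite e_sym evu.
have uniq_vus : uniq [:: v, u & s] by rewrite /= inE negb_or (adj_neq e_irr evu) vs us' us.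
have sum_s : \sum_(z <- s) val (f z) = size s.
  by rewrite (eq_big_seq (fun=> 1)) ?sum1_size // => z /f_s.
have := sum_le_weight f uniq_vus; rewrite !big_cons sum_s fv => w_ge.
have fu1 : val (f u) = 1 by lia.
have f0 z : z \notin [:: v, u & s] -> val (f z) = 0.
  by apply: weight_le_sum_eq0 => //; rewrite !big_cons sum_s fv fu1; lia.
exists v => // z zs zv; case: (eqVneq z u) => [-> //|zu].
have z0 : z \notin [:: v, u & s] by rewrite !inE !negb_or zv zu.
have [t ezt ft] := qtrdf_zero hf (f0 z z0).
case/boolP: (t \in [:: v, u & s]) => [|/f0]; last by rewrite ft.
rewrite !inE => /or3P [/eqP tv|/eqP tu|ts]; first by rewrite e_sym -tv.
  by move: ft; rewrite tu fu1.
by move: ft; rewrite f_s.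
Qed.

Lemma gamma_ge3 : 3 <= #|T| -> 3 <= gamma_qtR e.
Proof.
move=> n3; apply: gamma_ge => // f hf; rewrite leqNgt; apply/negP => w2.
have [v fv] := qtrdf_two_exists hf (leq_trans w2 n3); have [u evu fu] := qtrdf_two hf fv.
have vu : uniq [:: v; u] by rewrite /= inE (adj_neq e_irr evu).
by have := sum_le_weight f vu; rewrite !big_cons big_nil fv; move: fu; lia.
Qed.

Lemma gamma_ge4 : 4 <= #|T| -> (forall u, ~~ dominating e u) -> 4 <= gamma_qtR e.
Proof.
move=> n4 nodom; apply: gamma_ge => // f hf; rewrite leqNgt; apply/negP => w3.
have w_le : weight f <= 3 + size ([::] : seq T) by rewrite addn0.
have [w _ dom_w] := light_qtrdf_dominating (s := [::]) hf isT isT w_le (leq_trans w3 n4).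
by move/negP: (nodom w); apply; apply/dominatingP => z; apply: dom_w.
Qed.

Lemma gamma_le4_isolated a : 5 <= #|T| -> isolated e a -> gamma_qtR e <= 4 ->
  exists2 w, w != a & forall z, z != a -> z != w -> e w z.
Proof.
move=> n5 iso_a g4.
case: (boolP [exists w, (w != a) && [forall z, (z != a) && (z != w) ==> e w z]]).
  case/existsP => w /andP [wa /forallP dom_w]; exists w => // z za zw.
  by move: (dom_w z); rewrite za zw.
move/negP => nodom; have : 5 <= gamma_qtR e; last by lia.
apply: gamma_ge => // f hf; rewrite leqNgt; apply/negP => w4.
have iso_s : all (isolated e) [:: a] by rewrite /= iso_a.
have w_le : weight f <= 3 + size [:: a] by rewrite addn1.
have [w wa dom_w] := light_qtrdf_dominating (s := [:: a]) hf isT iso_s w_le (leq_trans w4 n5).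
apply: nodom; apply/existsP; exists w; move: wa; rewrite inE => -> /=.
by apply/forallP => z; apply/implyP => /andP [za zw]; apply: dom_w; rewrite ?inE.
Qed.

Definition labelling (Z2 Z1 : {set T}) : {ffun T -> 'I_3} :=
  [ffun z => if z \in Z2 then inord 2 else if z \in Z1 then inord 1 else ord0].

Lemma labellingE (Z2 Z1 : {set T}) z : val (labelling Z2 Z1 z) =
  if z \in Z2 then 2 else if z \in Z1 then 1 else 0.
Proof.
rewrite ffunE; case: ifP => _ /=; first by rewrite inordK.
by case: ifP => _ //=; rewrite inordK.
Qed.

Lemma weight_labelling (Z2 Z1 : {set T}) : weight (labelling Z2 Z1) <= 2 * #|Z2| + #|Z1|.
Proof.
rewrite /weight -!sum1_card big_distrr /= (big_mkcond (mem Z2)) (big_mkcond (mem Z1)).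
rewrite -big_split /=; apply: leq_sum => z _; rewrite labellingE.
by case: (z \in Z2); case: (z \in Z1).
Qed.

Lemma labelling_qtrdf (Z2 Z1 : {set T}) :
  (forall z, z \notin Z2 -> z \notin Z1 -> exists2 y, y \in Z2 & e z y) ->
  (forall z, z \in Z2 -> exists2 y, y \in Z2 :|: Z1 & e z y) ->
  is_qtrdf e (labelling Z2 Z1).
Proof.
move=> dom2 adj2; apply/andP; split; apply/forallP=> z; rewrite labellingE.
- case: ifP => // z2; case: ifP => // z1 /=.
  have [y y2 ezy] := dom2 z (negbT z2) (negbT z1).
  by apply/existsP; exists y; rewrite ezy labellingE y2.
- case: ifP => z2 /=; last by case: (z \in Z1); rewrite ?implybT.
  have [y y21 ezy] := adj2 z z2.
  apply/implyP=> /forallP /(_ y); rewrite ezy labellingE /=.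
  by move: y21; rewrite inE; case: (y \in Z2); case: (y \in Z1).
Qed.

Lemma gamma_add_deg_le u v : e u v -> gamma_qtR e + deg e u <= #|T| + 2.
Proof.
move=> euv; pose M := [set z | compl e u z].
have hf : is_qtrdf e (labelling [set u] (v |: M)).
  apply: labelling_qtrdf => [z|z].
    rewrite !inE negb_or /compl /= => zu /andP [_]; rewrite eq_sym zu negbK => ezu.
    by exists u; rewrite ?inE // e_sym.
  by rewrite inE => /eqP ->; exists v; rewrite // !inE eqxx orbT.
have := leq_trans (gamma_le hf) (weight_labelling _ _).
have := deg_compl e_irr u; have := deg_le e_irr u; have := cardsU1 v M.
have : 0 < #|T| by apply/card_gt0P; exists u.
rewrite cards1 /deg -/M; lia.
Qed.

Lemma gamma_add_deg_fork_le u v : fork e u v -> gamma_qtR e + deg e u <= #|T| + 1.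
Proof.
case/andP=> euv fork_uv; pose M := [set z | compl e u z]; pose Nv := [set z | e v z].
have hf : is_qtrdf e (labelling [set u; v] (M :\: Nv)).
  apply: labelling_qtrdf => [z|z].
    rewrite !inE !negb_or /compl /= => /andP [zu zv].
    rewrite negb_and negbK eq_sym zu /=.
    case: (boolP (e u z)) => [ezu _ | nezu]; first by exists u; rewrite ?inE ?eqxx // e_sym.
    by rewrite orbF => ezv; exists v; rewrite ?inE ?eqxx ?orbT // e_sym.
  rewrite !inE => /orP [] /eqP ->; first by exists v; rewrite // !inE eqxx orbT.
  by exists u; rewrite ?inE ?eqxx // e_sym.
have := leq_trans (gamma_le hf) (weight_labelling _ _).
have MNv : #|M :&: Nv| = #|[set w | e v w && compl e u w]|.
  by apply: eq_card => w; rewrite !inE andbC.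
have := cardsID Nv M; have := deg_compl e_irr u; have := deg_le e_irr u.
have : 0 < #|T| by apply/card_gt0P; exists u.
rewrite cards2 (adj_neq e_irr euv) /deg -/M; lia.
Qed.

Lemma gamma_dominating_le3 u : 2 <= #|T| -> dominating e u -> gamma_qtR e <= 3.
Proof.
move=> n2 dom_u; have [v vu] := exists_neq u n2.
have /dominatingP Du := dom_u; have := gamma_add_deg_le (Du v vu).
by move: dom_u; rewrite -(deg_dominating e_irr) => /eqP ->; lia.
Qed.

End QTRDF.

(** * Regular graphs *)

Section Regular.
Variables (T : finType) (e : rel T).
Hypotheses (e_sym : symmetric e) (e_irr : irreflexive e).

(* Take two non-neighbours [b1], [b2] of a vertex [u]. As the complement has no
   fork, each [bi] misses at most one neighbour of [u]; as [e] has no fork, no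
   neighbour of [u] is adjacent to both. Hence 2 (r - 1) <= r. *)
Lemma regular_forkfree_deg2 r : (forall x, deg e x = r) -> 2 <= r -> r + 3 <= #|T| ->
  (forall u v, ~~ fork e u v) -> (forall u v, ~~ fork (compl e) u v) -> r = 2.
Proof.
move=> reg r2 rn nofork nofork_c.
have /card_gt0P [u _] : 0 < #|T| by lia.
pose A := [set y | e u y]; pose X b := A :&: [set y | e b y].
have cardA : #|A| = r by rewrite -(reg u).
have [b1 [b2 [b1B b2B b12]]] : exists b1 b2, [/\ compl e u b1, compl e u b2 & b1 != b2].
  have : 1 < deg (compl e) u by rewrite deg_compl // reg; lia.
  by case/card_gt1P => b1 [b2 []]; rewrite !inE => *; exists b1, b2.
have X_large b : compl e u b -> r <= #|X b| + 1.
  move=> ub; rewrite -cardA -(cardsID [set y | e b y] A) leq_add2l.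
  apply: leq_trans (_ : #|[set w | compl e b w && compl (compl e) u w]| <= 1).
    apply/subset_leq_card/subsetP => w; rewrite !inE complK // /compl /= => /andP [nbw uw].
    rewrite nbw uw !andbT; apply: contraTneq uw => <-.
    by case/andP: ub.
  by move: (nofork_c u b); rewrite /fork ub /= -ltnNge ltnS.
have X_disj : [disjoint X b1 & X b2].
  apply/pred0P => a; rewrite /= !inE; apply/negP => /and3P [/andP [ua b1a] _ b2a].
  move/negP: (nofork u a); apply; rewrite /fork ua /=.
  apply/card_geqP; exists [:: b1; b2]; split; rewrite //= ?inE ?b12 //.
  by move=> w; rewrite !inE => /orP [] /eqP ->; rewrite e_sym ?b1a ?b2a.
have : #|X b1 :|: X b2| <= r by rewrite -cardA subset_leq_card // subUset !subsetIl.
rewrite cardsU (disjoint_setI0 X_disj) cards0 subn0.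
by have := X_large b1 b1B; have := X_large b2 b2B; lia.
Qed.

Hypothesis reg2 : forall x, deg e x = 2.

Lemma deg2_adjE x p q : e x p -> e x q -> p != q -> forall y, e x y = (y == p) || (y == q).
Proof.
move=> exp exq pq y; suff /setP/(_ y) : [set p; q] = [set y | e x y] by rewrite !inE.
apply/eqP; rewrite eqEcard cards2 pq -/(deg e x) reg2 andbT.
by apply/subsetP => z; rewrite !inE => /orP [] /eqP ->.
Qed.

Lemma deg2_other x p : e x p -> exists2 q, e x q & q != p.
Proof.
move=> exp; have : 1 < deg e x by rewrite reg2.
case/card_gt1P => y [z []]; rewrite !inE => exy exz yz.
by case: (eqVneq y p) => [yp|]; [exists z; rewrite // -yp eq_sym | exists y].
Qed.

(* A vertex outside a neighbourhood-closed set [S] has its two neighbours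
   outside [S] as well. *)
Lemma closed_card (S : {set T}) : (forall y z, y \in S -> e y z -> z \in S) ->
  #|S| < #|T| -> #|S| + 3 <= #|T|.
Proof.
move=> closedS ltS; have /card_gt0P [x] : 0 < #|~: S| by have := cardsC S; lia.
rewrite inE => xS; suff : 3 <= #|~: S| by have := cardsC S; lia.
have -> : 3 = #|x |: [set y | e x y]| by rewrite cardsU1 inE e_irr -/(deg e x) reg2.
apply/subset_leq_card/subsetP => y; rewrite !inE => /predU1P [-> //|exy].
by apply: contra xS => yS; apply: closedS yS _; rewrite e_sym.
Qed.

Hypothesis n5 : #|T| = 5.

Lemma order5_triangle_free u a c : e u a -> e u c -> ~~ e a c.
Proof.
move=> ua uc; apply/negP => ac.
have [au ca cu] : [/\ e a u, e c a & e c u] by split; rewrite e_sym.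
have [ua_ne uc_ne ac_ne] := And3 (adj_neq e_irr ua) (adj_neq e_irr uc) (adj_neq e_irr ac).
have Nu := deg2_adjE ua uc ac_ne; have Na := deg2_adjE au ac uc_ne.
have Nc := deg2_adjE cu ca ua_ne.
suff /closed_card : forall y z, y \in u |: [set a; c] -> e y z -> z \in u |: [set a; c].
  by rewrite cardsU1 cards2 !inE negb_or ua_ne uc_ne ac_ne n5 => /(_ isT).
move=> y z; rewrite !inE => /or3P [] /eqP ->; rewrite ?Nu ?Na ?Nc;
  by case/orP => /eqP ->; rewrite !eqxx ?orbT.
Qed.

Lemma order5_square_free u a c x : e u a -> e u c -> a != c -> e x a -> e x c -> x = u.
Proof.
move=> ua uc ac xa xc; apply/eqP; apply: contraT => xu.
have [au ax cu cx] : [/\ e a u, e a x, e c u & e c x] by split; rewrite e_sym.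
have Nu := deg2_adjE ua uc ac; have Nx := deg2_adjE xa xc ac.
have ux : u != x by rewrite eq_sym.
have Na := deg2_adjE au ax ux; have Nc := deg2_adjE cu cx ux.
have [xa_ne xc_ne] : x != a /\ x != c by split; apply: adj_neq.
pose S := x |: (u |: [set a; c]).
suff /closed_card : forall y z, y \in S -> e y z -> z \in S.
  rewrite /S !cardsU1 cards1 !inE !negb_or xu xa_ne xc_ne ac n5.
  by rewrite (adj_neq e_irr ua) (adj_neq e_irr uc) => /(_ isT).
move=> y z; rewrite !inE => /or4P [] /eqP ->; rewrite ?Nu ?Nx ?Na ?Nc;
  by case/orP => /eqP ->; rewrite !eqxx ?orbT.
Qed.

(* Around [u] with neighbours [a] and [c], the second neighbours [a'] of [a] and
   [c'] of [c] are new and distinct as there is no triangle and no square, and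
   then they must be adjacent. *)
Lemma two_regular_order5_cycle : iso e (cycleG 5).
Proof.
have /card_gt0P [u _] : 0 < #|T| by rewrite n5.
have /card_gt1P [a [c []]] : 1 < deg e u by rewrite reg2.
rewrite !inE => ua uc ac; have [au cu] : e a u /\ e c u by split; rewrite e_sym.
have [a' aa' a'u] := deg2_other au; have [c' cc' c'u] := deg2_other cu.
have [a'a c'c] : e a' a /\ e c' c by split; rewrite e_sym.
have a'c : a' != c by apply: contraNneq (order5_triangle_free ua uc) => <-.
have c'a : c' != a by apply: contraNneq (order5_triangle_free uc ua) => <-.
have a'c' : a' != c'.
  apply: contra_neq a'u => a'c'E; apply: (order5_square_free ua uc ac) => //.
  by rewrite a'c'E e_sym.
have dist : uniq [:: u; a; a'; c'; c].
  rewrite /= !inE !negb_or ac a'c' a'c !(eq_sym u) a'u c'u (eq_sym a c') c'a.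
  by rewrite !(adj_neq e_irr) // e_sym.
have cover x : x \in [:: u; a; a'; c'; c] by apply: mem_uniq_card; rewrite ?n5.
have a'c'_adj : e a' c'.
  have [y a'y ya] := deg2_other a'a.
  have yu : y != u by apply: contraNneq (order5_triangle_free au aa') => <-; rewrite e_sym.
  have yc : y != c.
    by apply: contra_neq a'u => yc; apply: (order5_square_free ua uc ac); rewrite -?yc.
  have ya' : y != a' by rewrite eq_sym (adj_neq e_irr a'y).
  move: (cover y).
  by rewrite !inE (negbTE yu) (negbTE ya) (negbTE ya') (negbTE yc) /= orbF => /eqP <-.
have Nu := deg2_adjE ua uc ac.
have [ua' uc' ac' ca'] : [/\ u != a', u != c', a != c' & c != a'].
  by rewrite !(eq_sym u) !(eq_sym a) !(eq_sym c).
have c'a' : e c' a' by rewrite e_sym.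
have Na := deg2_adjE au aa' ua'; have Nc := deg2_adjE cu cc' uc'.
have Na' := deg2_adjE a'a a'c'_adj ac'; have Nc' := deg2_adjE c'c c'a' ca'.
apply: (iso_of_seq (s := [:: u; a; a'; c'; c]) (x0 := u) dist) => // i j.
case: i j => [[|[|[|[|[|i]]]]] hi] [[|[|[|[|[|j]]]]] hj] //=.
all: rewrite /cycleG /= ?modnn ?modn_small //= ?Nu ?Na ?Nc ?Na' ?Nc' ?eqxx ?orbT //.
all: by apply/negbTE/negP => /orP [] /eqP E; move: dist; rewrite E /= !inE !eqxx ?orbT /= ?andbF.
Qed.

End Regular.

(** * Graphs with a dominating vertex *)

Section DominatingVertex.
Variables (T : finType) (e : rel T).
Hypotheses (e_sym : symmetric e) (e_irr : irreflexive e).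

Lemma inF1_intro u w : 2 < #|T| -> dominating e u -> [set y | e w y] = [set u] -> inF1 e.
Proof.
move=> n3 dom_u Nw; have degw : deg e w = 1 by rewrite /deg Nw cards1.
apply/andP; split; last by apply/existsP; exists w; rewrite degw.
apply/cards1P; exists u; apply/setP => v; rewrite !inE (deg_dominating e_irr).
apply/idP/eqP => [dom_v|->//]; case: (eqVneq v w) => [vw|vw].
  by move: dom_v; rewrite vw -(deg_dominating e_irr) degw => /eqP n1; exfalso; lia.
have /dominatingP Dv := dom_v.
have : v \in [set y | e w y] by rewrite inE e_sym Dv // eq_sym.
by rewrite Nw inE => /eqP.
Qed.

Lemma nbhd1_or_other p u : e p u -> [set y | e p y] = [set u] \/ exists2 r, e p r & r != u.
Proof.
move=> epu; case: (pickP [pred r | e p r && (r != u)]) => [r /andP [pr ru] | none].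
  by right; exists r.
left; apply/setP => y; rewrite !inE; apply/idP/eqP => [epy|->//].
by apply/eqP; apply: contraT => yu; move: (none y); rewrite /= epy yu.
Qed.

(* If neither [p] nor its non-neighbour [q] has degree 1, their extra
   neighbours coincide with the fourth vertex, which is then dominating. *)
Lemma order4_unique_dominating u : #|T| = 4 -> dominating e u ->
  (forall v, dominating e v -> v = u) -> inF1 e.
Proof.
move=> n4 dom_u uniq_u; have /dominatingP Du := dom_u.
have n3 : 2 < #|T| by rewrite n4.
have [p pu] := exists_neq u (ltnW n3).
have [q /andP [pq npq]] : exists q, compl e p q.
  by apply: exists_compl_adj; apply/negP => /uniq_u pE; rewrite pE eqxx in pu.
have pu_adj : e p u by rewrite e_sym Du.
have qu : q != u by apply: contraNneq npq => ->.
have qu_adj : e q u by rewrite e_sym Du.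
have [Np|[r pr ru]] := nbhd1_or_other pu_adj; first exact: inF1_intro n3 dom_u Np.
have [Nq|[r' qr' r'u]] := nbhd1_or_other qu_adj; first exact: inF1_intro n3 dom_u Nq.
have qr : q != r by apply: contraNneq npq => ->.
have dist : uniq [:: u; p; q; r].
  by rewrite /= !inE !negb_or pq qr !(eq_sym u) pu qu ru (adj_neq e_irr pr).
have cover z : z \in [:: u; p; q; r] by apply: mem_uniq_card; rewrite ?n4.
have r'r : r' = r.
  have r'p : r' != p by apply: contraNneq npq => E; rewrite e_sym -E.
  have r'q : r' != q by rewrite eq_sym (adj_neq e_irr qr').
  by move: (cover r'); rewrite !inE (negbTE r'u) (negbTE r'p) (negbTE r'q) => /eqP.
have /uniq_u rE : dominating e r.
  apply/dominatingP => z zr; move: (cover z); rewrite !inE (negbTE zr) orbF.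
  by case/or3P => /eqP ->; rewrite e_sym ?Du // -r'r.
by rewrite rE eqxx in ru.
Qed.

Lemma order4_two_dominating u u' : #|T| = 4 -> dominating e u -> dominating e u' -> u' != u ->
  iso e (completeG 4) \/ iso e K4_minus_e.
Proof.
move=> n4 /dominatingP Du /dominatingP Du' u'u.
have Eu z : e u z = (z != u) by case: eqVneq => [->|]; [rewrite e_irr | apply: Du].
have Eu' z : e u' z = (z != u') by case: eqVneq => [->|]; [rewrite e_irr | apply: Du'].
have /cards2P [x [y [xy Sxy]]] : #|~: [set u; u']| == 2.
  by have := cardsC [set u; u']; rewrite cards2 eq_sym u'u n4; lia.
have [/andP [xu xu'] /andP [yu yu']] : (x != u) && (x != u') /\ (y != u) && (y != u').
  by split; rewrite -negb_or -in_set2 -in_setC Sxy !inE eqxx ?orbT.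
have dist : uniq [:: x; y; u; u'] by rewrite /= !inE !negb_or xy xu xu' yu yu' eq_sym u'u.
case exy: (e x y); [left | right].
all: apply: (iso_of_seq (s := [:: x; y; u; u']) (x0 := u) dist) => // [z|i j].
all: try by apply: mem_uniq_card; rewrite ?n4.
all: case: i j => [[|[|[|[|i]]]] hi] [[|[|[|[|j]]]] hj] //=; rewrite /completeG /K4_minus_e /=.
all: rewrite ?e_irr ?Eu ?Eu' ?(e_sym _ u) ?(e_sym _ u') ?Eu ?Eu' ?exy ?(e_sym y x) ?exy //.
all: by rewrite eq_sym u'u.
Qed.

Lemma large_dominating_inF1 u : 5 <= #|T| -> dominating e u -> gamma_qtR (compl e) <= 4 ->
  inF1 e.
Proof.
move=> n5 dom_u g4; have /dominatingP Du := dom_u.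
have [w wu cdom_w] := gamma_le4_isolated (compl_sym e_sym) (compl_irr e) n5
  (dominating_compl_isolated dom_u) g4.
apply: (inF1_intro (w := w) (ltnW (ltnW n5)) dom_u); apply/setP => y; rewrite !inE.
apply/idP/eqP => [wy|->]; last by rewrite e_sym Du.
apply/eqP; apply: contraT => yu; have yw : y != w by rewrite eq_sym (adj_neq e_irr wy).
by move: (cdom_w y yu yw); rewrite /compl /= wy andbF.
Qed.

Lemma dominating_classify u : 4 <= #|T| -> dominating e u -> gamma_qtR (compl e) <= 4 ->
  [\/ iso e (completeG 4), iso e K4_minus_e | inF1 e].
Proof.
move=> n4 dom_u g4; case: (ltnP 4 #|T|) => [n5|n4'].
  by apply: Or33; apply: large_dominating_inF1 n5 dom_u g4.
have {n4'} n4e : #|T| = 4 by lia.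
case: (pickP [pred v | dominating e v && (v != u)]) => [v /andP [dom_v vu]|none].
  by case: (order4_two_dominating n4e dom_u dom_v vu) => ?; [apply: Or31 | apply: Or32].
apply: Or33; apply: (order4_unique_dominating n4e dom_u) => v dom_v.
by apply/eqP; apply: contraT => vu; move: (none v); rewrite /= dom_v vu.
Qed.

End DominatingVertex.

Lemma inF1_gamma (T : finType) (e : rel T) : symmetric e -> irreflexive e -> 4 <= #|T| ->
  inF1 e -> gamma_qtR e <= 3 /\ gamma_qtR (compl e) <= 4.
Proof.
move=> e_sym e_irr n4 /andP [/cards1P [u Du] /existsP [w /eqP degw]].
have : u \in [set v | deg e v == #|T|.-1] by rewrite Du inE.
rewrite inE (deg_dominating e_irr) => dom_u.
split; first exact: gamma_dominating_le3 (ltnW (ltnW n4)) dom_u.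
have /card_gt0P [z] : 0 < deg (compl e) w by rewrite deg_compl // degw; lia.
rewrite inE => wz; have := gamma_add_deg_le (compl_sym e_sym) (compl_irr e) wz.
by rewrite deg_compl // degw; lia.
Qed.

Lemma completeG4_dominating : dominating (completeG 4) ord0.
Proof. by apply/forallP => -[[|[|[|[|i]]]] hi]. Qed.

Lemma compl_emptyG4_dominating : dominating (compl (emptyG 4)) ord0.
Proof. by apply/forallP => -[[|[|[|[|i]]]] hi]. Qed.

Lemma K4_minus_e_dominating : dominating K4_minus_e (Ordinal (isT : 2 < 4)).
Proof. by apply/forallP => -[[|[|[|[|i]]]] hi]. Qed.

Lemma cycle5_deg_le2 (i : 'I_5) : deg (cycleG 5) i <= 2.
Proof.
apply: (deg_le2 (p := inord (i.+1 %% 5)) (q := inord ((i + 4) %% 5))) => j.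
by case: i j => [[|[|[|[|[|i]]]]] hi] [[|[|[|[|[|j]]]]] hj] //= _; rewrite -!val_eqE /= !inordK.
Qed.

Lemma compl_cycle5_deg_le2 (i : 'I_5) : deg (compl (cycleG 5)) i <= 2.
Proof.
apply: (deg_le2 (p := inord ((i + 2) %% 5)) (q := inord ((i + 3) %% 5))) => j.
by case: i j => [[|[|[|[|[|i]]]]] hi] [[|[|[|[|[|j]]]]] hj] //= _; rewrite -!val_eqE /= !inordK.
Qed.

Section Main.
Variables (T : finType) (e : rel T).
Hypotheses (e_sym : symmetric e) (e_irr : irreflexive e) (n4 : 4 <= #|T|).
Let ce_sym := compl_sym e_sym.
Let ce_irr := compl_irr e.

Lemma gamma_sum_ge7 : 7 <= gamma_qtR e + gamma_qtR (compl e).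
Proof.
have n3 := ltnW n4; case: (boolP [exists u, dominating e u]) => [/existsP [u dom_u]|].
  have : 4 <= gamma_qtR (compl e).
    by apply: gamma_ge4 => // x; apply: (dominating_compl_nondominating e_sym x _ dom_u); lia.
  by have := gamma_ge3 e_irr n3; lia.
rewrite negb_exists => /forallP nodom.
by have := gamma_ge4 e_sym e_irr n4 nodom; have := gamma_ge3 ce_irr n3; lia.
Qed.

Lemma gamma_sum_dominating_le u : dominating e u \/ dominating (compl e) u ->
  gamma_qtR e + gamma_qtR (compl e) <= #|T| + 3.
Proof.
have n2 : 1 < #|T| by lia.
case=> dom_u.
  by have := gamma_dominating_le3 e_sym e_irr n2 dom_u; have := gamma_le_card (compl e); lia.
by have := gamma_dominating_le3 ce_sym ce_irr n2 dom_u; have := gamma_le_card e; lia.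
Qed.

Lemma gamma_add_deg_le_both x : ~~ dominating e x -> ~~ dominating (compl e) x ->
  gamma_qtR e + deg e x <= #|T| + 2 /\ gamma_qtR (compl e) + (#|T|.-1 - deg e x) <= #|T| + 2.
Proof.
move=> ndom ndom_c; have [y xy] := exists_adj ndom_c; have [z xz] := exists_compl_adj ndom.
by split; [apply: gamma_add_deg_le xy | rewrite -deg_compl //; apply: gamma_add_deg_le xz].
Qed.

Lemma gamma_sum_le : gamma_qtR e + gamma_qtR (compl e) <= #|T| + 5.
Proof.
case: (boolP [exists u, dominating e u || dominating (compl e) u]).
  by case/existsP => u /orP /gamma_sum_dominating_le; lia.
rewrite negb_exists => /forallP nodom; have /card_gt0P [x _] : 0 < #|T| by lia.
have /norP [ndom ndom_c] := nodom x.
by have [] := gamma_add_deg_le_both ndom ndom_c; have := deg_le e_irr x; lia.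
Qed.

Lemma gamma_sum_max_regular : gamma_qtR e + gamma_qtR (compl e) = #|T| + 5 ->
  exists r, [/\ forall x, deg e x = r, 2 <= r, r + 3 <= #|T|,
    forall u v, ~~ fork e u v & forall u v, ~~ fork (compl e) u v].
Proof.
move=> hs; have nodom x : ~~ dominating e x && ~~ dominating (compl e) x.
  by rewrite -negb_or; apply/negP => /orP /gamma_sum_dominating_le; lia.
have tight x : gamma_qtR e + deg e x = #|T| + 2 /\
    gamma_qtR (compl e) + (#|T|.-1 - deg e x) = #|T| + 2.
  have /andP [ndom ndom_c] := nodom x; have [] := gamma_add_deg_le_both ndom ndom_c.
  by have := deg_le e_irr x; lia.
have /card_gt0P [x0 _] : 0 < #|T| by lia.
exists (deg e x0); have [g1 g2] := tight x0.
have := gamma_le_card e; have := gamma_le_card (compl e); have := deg_le e_irr x0.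
split=> //; try lia.
- by move=> x; have [] := tight x; lia.
- move=> u v; apply/negP => /(gamma_add_deg_fork_le e_sym e_irr).
  by have [] := tight u; lia.
- move=> u v; apply/negP => /(gamma_add_deg_fork_le ce_sym ce_irr).
  by rewrite deg_compl //; have [] := tight u; lia.
Qed.

Lemma gamma_sum_max_cycle : gamma_qtR e + gamma_qtR (compl e) = #|T| + 5 -> iso e (cycleG 5).
Proof.
case/gamma_sum_max_regular => r [reg r2 rn nofork nofork_c].
have r_eq2 := regular_forkfree_deg2 e_sym e_irr reg r2 rn nofork nofork_c.
have reg_c x : deg (compl e) x = #|T|.-1 - r by rewrite deg_compl // reg.
have : #|T|.-1 - r = 2.
  apply: (regular_forkfree_deg2 ce_sym ce_irr reg_c) => //; try lia.
  by rewrite complK.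
move=> rc_eq2; apply: (two_regular_order5_cycle e_sym e_irr) => [x|]; last lia.
by rewrite reg.
Qed.

Lemma gamma_sum_eq7 : gamma_qtR e + gamma_qtR (compl e) = 7 ->
  iso e (completeG 4) \/ iso e (emptyG 4) \/ iso e K4_minus_e \/ iso (compl e) K4_minus_e
  \/ inF1 e \/ inF1' e.
Proof.
move=> h7; have n3 := ltnW n4.
case: (boolP [exists u, dominating e u]) => [/existsP [u dom_u]|].
  have g4 : gamma_qtR (compl e) <= 4 by have := gamma_ge3 e_irr n3; lia.
  by case: (dominating_classify e_sym e_irr n4 dom_u g4) => h; do ?[by left | right].
rewrite negb_exists => /forallP nodom.
case: (boolP [exists u, dominating (compl e) u]) => [/existsP [u dom_u]|].
  have g4 : gamma_qtR (compl (compl e)) <= 4.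
    by rewrite complK //; have := gamma_ge3 ce_irr n3; lia.
  case: (dominating_classify ce_sym ce_irr n4 dom_u g4) => h.
  - by right; left; apply: iso_compl_complete.
  - by do 3 right; left.
  - by do 5 right.
rewrite negb_exists => /forallP nodom_c.
by have := gamma_ge4 e_sym e_irr n4 nodom; have := gamma_ge4 ce_sym ce_irr n4 nodom_c; lia.
Qed.

Lemma gamma_sum_le7 :
  iso e (completeG 4) \/ iso e (emptyG 4) \/ iso e K4_minus_e \/ iso (compl e) K4_minus_e
  \/ inF1 e \/ inF1' e -> gamma_qtR e + gamma_qtR (compl e) <= 7.
Proof.
have order4 u : #|T| = 4 -> dominating e u \/ dominating (compl e) u ->
    gamma_qtR e + gamma_qtR (compl e) <= 7.
  by move=> n4e /gamma_sum_dominating_le; rewrite n4e.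
case=> [h|[h|[h|[h|[h|h]]]]].
- have [u dom_u] := iso_dominating h completeG4_dominating.
  by apply: (order4 u (iso_card h)); left.
- have [u dom_u] := iso_dominating (iso_compl h) compl_emptyG4_dominating.
  by apply: (order4 u (iso_card h)); right.
- have [u dom_u] := iso_dominating h K4_minus_e_dominating.
  by apply: (order4 u (iso_card h)); left.
- have [u dom_u] := iso_dominating h K4_minus_e_dominating.
  by apply: (order4 u (iso_card h)); right.
- by have [] := inF1_gamma e_sym e_irr n4 h; lia.
- by have [] := inF1_gamma ce_sym ce_irr n4 h; rewrite complK //; lia.
Qed.

End Main.

Lemma gamma_sum_cycle5 (T : finType) (e : rel T) : symmetric e -> iso e (cycleG 5) ->
  gamma_qtR e + gamma_qtR (compl e) = #|T| + 5.
Proof.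
move=> e_sym iso5; have n5 := iso_card iso5.
rewrite !gamma_maxdeg2 ?n5 //; first exact: compl_sym.
  exact: iso_deg_le (iso_compl iso5) compl_cycle5_deg_le2.
exact: iso_deg_le iso5 cycle5_deg_le2.
Qed.

Theorem mainTheorem10 (T : finType) (e : rel T)
  (e_sym : symmetric e) (e_irr : irreflexive e) (n4 : 4 <= #|T|) :
  let s := gamma_qtR e + gamma_qtR (compl e) in
  [/\ 7 <= s, s <= #|T| + 5,
      s = 7 <-> (iso e (completeG 4) \/ iso e (emptyG 4) \/ iso e K4_minus_e
                 \/ iso (compl e) K4_minus_e \/ inF1 e \/ inF1' e)
    & s = #|T| + 5 <-> iso e (cycleG 5)].
Proof.
have ge7 := gamma_sum_ge7 e_sym e_irr n4.
split=> //; first exact: gamma_sum_le.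
  split; first exact: gamma_sum_eq7.
  by move/(gamma_sum_le7 e_sym e_irr n4) => le7; apply/eqP; rewrite eqn_leq le7.
by split; [exact: gamma_sum_max_cycle | exact: gamma_sum_cycle5].
Qed.
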